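(* Let $a_{n,0}$ denote the number of matchings of size $n$ with no occurrence of the endhered pattern $21$. Then $a_{1,0}=1$, $a_{2,0}=2$, and for all $n\ge2$, $$a_{n+1,0}=2n\,a_{n,0}+2(n-1)\,a_{n-1,0}.$$
   Context: A matching of size $n$ is a set of $n$ arcs $(a,b)$ with $1\le a<b\le 2n$ such that each point of $\{1,\dots,2n\}$ belongs to exactly one arc. An occurrence of the endhered pattern $21$ in a matching $\mu$ is a pair of arcs of $\mu$ of the form $(i+1,j+2),(i+2,j+1)$ (two nested arcs with consecutive starting points and consecutive ending points). *)

From mathcomp Require Import all_boot.
Set Implicit Arguments. Unset Strict Implicit. Unset Printing Implicit Defensive.

(* Points {1,...,2n} are represented 0-based as 'I_(n.*2); an arc (a,b) with a<b
   is a pair of points. A matching of size n is a set of arcs covering each point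
   exactly once. *)
Definition arc (n : nat) := ('I_(n.*2) * 'I_(n.*2))%type.

Definition is_matching (n : nat) (M : {set arc n}) : bool :=
  [forall e in M, (e.1 < e.2)%N] &&
  [forall p : 'I_(n.*2), #|[set e in M | (e.1 == p) || (e.2 == p)]| == 1].

Definition has_endhered21 (n : nat) (M : {set arc n}) : bool :=
  [exists e1 in M, exists e2 in M,
     ((e2.1 : nat) == e1.1 + 1) && ((e1.2 : nat) == e2.2 + 1)].

Definition a0 (n : nat) : nat :=
  #|[set M : {set arc n} | is_matching M && ~~ has_endhered21 M]|.

(* A matching of size n is a fixed-point-free involution of {0, ..., 2n-1}.
   Let A_m (resp. B_m) be the set of such involutions of {0, ..., m-1} with no
   (resp. exactly one) occurrence of 21.  Deleting the arc at point 0 maps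
   A_(m+2) to involutions on m points: when the arc (0, b) is put back into g,
   it creates an occurrence exactly when b = g 0 + 2, and it destroys an old
   occurrence exactly when b separates its two openers or its two closers.
   Each g in A_m thus has m preimages, each g in B_m has 2 (b must destroy the
   single occurrence), and no other g has any:
   |A_(m+2)| = m |A_m| + 2 |B_m|.  Contracting the single occurrence of an
   element of B_(k+2) (deleting the arc at its second opener) is a bijection
   onto pairs (h, a) with h in A_k and a an opener of h, so
   |B_(k+2)| = k/2 |A_k|.  For m = 2n these two identities give the recurrence. *)

From mathcomp Require Import all_boot zify.
Set Implicit Arguments. Unset Strict Implicit. Unset Printing Implicit Defensive.

Ltac case_ifs := repeat match goal with
 | |- context [if ?b then _ else _] =>
   lazymatch b with context [if _ then _ else _] => fail | _ =>
   let h := fresh "h" in case: (boolP b) => h /= end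
 end.

(* For [p < q], [skip2 p q] enumerates [nat] minus [p] and [q] increasingly. *)
Definition skip2 p q x := if x < p then x else if x.+1 < q then x.+1 else x.+2.
Definition unskip2 p q y := if y < p then y else if y < q then y.-1 else y - 2.

Ltac skip2_arith := rewrite /skip2 /unskip2; case_ifs; lia.

Section Skip2.
Variables p q : nat.
Hypothesis ltpq : p < q.

Lemma skip2_neq_p x : skip2 p q x <> p. Proof. skip2_arith. Qed.
Lemma skip2_neq_q x : skip2 p q x <> q. Proof. skip2_arith. Qed.
Lemma skip2K : cancel (skip2 p q) (unskip2 p q). Proof. move=> x; skip2_arith. Qed.
Lemma unskip2K y : y <> p -> y <> q -> skip2 p q (unskip2 p q y) = y.
Proof. skip2_arith. Qed.
Lemma ltn_skip2 x y : (skip2 p q x < skip2 p q y) = (x < y).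
Proof. rewrite /skip2; case_ifs; lia. Qed.
Lemma skip2_ltS2 m x : q < m.+2 -> (skip2 p q x < m.+2) = (x < m).
Proof. rewrite /skip2; case_ifs; lia. Qed.
Lemma unskip2_lt m y : q < m.+2 -> y < m.+2 -> y <> p -> y <> q -> unskip2 p q y < m.
Proof. skip2_arith. Qed.
Lemma skip2S x : x.+1 <> p -> x.+2 <> q -> skip2 p q x.+1 = (skip2 p q x).+1.
Proof. skip2_arith. Qed.
Lemma unskip2S y : y <> p -> y <> q -> y.+1 <> p -> y.+1 <> q ->
  unskip2 p q y.+1 = (unskip2 p q y).+1.
Proof. skip2_arith. Qed.
Lemma skip2_eqS x y : skip2 p q x = (skip2 p q y).+1 ->
  [/\ x = y.+1, y.+1 <> p & y.+2 <> q].
Proof. rewrite /skip2; case_ifs => e; split; lia. Qed.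
End Skip2.

Definition fpf_inv m (F : nat -> nat) :=
  forall x, x < m -> [/\ F x < m, F x <> x & F (F x) = x].
Definition eq_below m (F G : nat -> nat) := forall x, x < m -> F x = G x.

Definition ins_arc p q (G : nat -> nat) x :=
  if x == p then q else if x == q then p else skip2 p q (G (unskip2 p q x)).
Definition del_arc p q (F : nat -> nat) x := unskip2 p q (F (skip2 p q x)).

Lemma eq_below_sym m F G : eq_below m F G -> eq_below m G F.
Proof. by move=> h x xm; rewrite h. Qed.
Lemma eq_below_trans m F G H : eq_below m F G -> eq_below m G H -> eq_below m F H.
Proof. by move=> h1 h2 x xm; rewrite h1 ?h2. Qed.
Lemma fpf_inv_eq_below m F G : eq_below m F G -> fpf_inv m F -> fpf_inv m G.
Proof. by move=> h iF x xm; case: (iF x xm) => *; rewrite -!h. Qed.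

Lemma ins_arc_p p q G : ins_arc p q G p = q. Proof. by rewrite /ins_arc eqxx. Qed.
Lemma ins_arc_q p q G : ins_arc p q G q = p. Proof. by rewrite /ins_arc eqxx; case: eqP. Qed.

Section InsDelArc.
Variables p q m : nat.
Hypotheses (ltpq : p < q) (ltqm : q < m.+2).

Lemma ins_arc_skip2 G x : ins_arc p q G (skip2 p q x) = skip2 p q (G x).
Proof.
rewrite /ins_arc; case: eqP => [/skip2_neq_p //|_]; case: eqP => [/skip2_neq_q //|_].
by rewrite (skip2K ltpq).
Qed.

Lemma skip2_cases y : y < m.+2 ->
  [\/ y = p, y = q | exists2 x, x < m & y = skip2 p q x].
Proof.
move=> ym; case: (y =P p) => [->|yp]; first by constructor 1.
case: (y =P q) => [->|yq]; first by constructor 2.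
by constructor 3; exists (unskip2 p q y); [exact: unskip2_lt | rewrite unskip2K].
Qed.

Lemma fpf_inv_ins_arc G : fpf_inv m G -> fpf_inv m.+2 (ins_arc p q G).
Proof.
move=> iG y ym; case: (skip2_cases ym) => [->|->|[x xm ->]].
- by rewrite ins_arc_p ins_arc_q; split=> //; lia.
- by rewrite ins_arc_q ins_arc_p; split=> //; lia.
- case: (iG x xm) => Gxm Gxx GGx; rewrite !ins_arc_skip2 GGx skip2_ltS2 //.
  by split=> // /(can_inj (skip2K ltpq)).
Qed.

Section DelArc.
Variable F : nat -> nat.
Hypotheses (iF : fpf_inv m.+2 F) (Fp : F p = q).

Lemma fpf_inv_partner : F q = p.
Proof. by rewrite -Fp; case: (iF (ltn_trans ltpq ltqm)). Qed.

Lemma partner_skip2 x : x < m -> F (skip2 p q x) <> p /\ F (skip2 p q x) <> q.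
Proof.
move=> xm; have sxm : skip2 p q x < m.+2 by rewrite skip2_ltS2.
have [_ _ FF] := iF sxm.
split=> e; move: FF; rewrite e ?Fp ?fpf_inv_partner => /esym.
- exact: skip2_neq_q.
- exact: skip2_neq_p.
Qed.

Lemma fpf_inv_del_arc : fpf_inv m (del_arc p q F).
Proof.
move=> x xm; rewrite /del_arc.
have sxm : skip2 p q x < m.+2 by rewrite skip2_ltS2.
have [Fxm Fxx FFx] := iF sxm.
have [nFp nFq] := partner_skip2 xm.
rewrite unskip2K // FFx (skip2K ltpq); split=> //; first exact: unskip2_lt.
by move=> e; apply: Fxx; rewrite -{2}e unskip2K.
Qed.

Lemma del_arcK : eq_below m.+2 (ins_arc p q (del_arc p q F)) F.
Proof.
move=> y ym; case: (skip2_cases ym) => [->|->|[x xm ->]].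
- by rewrite ins_arc_p.
- by rewrite ins_arc_q fpf_inv_partner.
- have [nFp nFq] := partner_skip2 xm.
  by rewrite ins_arc_skip2 /del_arc unskip2K.
Qed.
End DelArc.

Lemma ins_arcK G x : del_arc p q (ins_arc p q G) x = G x.
Proof. by rewrite /del_arc ins_arc_skip2 (skip2K ltpq). Qed.

Lemma ins_arc_eq_below G G' :
  eq_below m G G' -> eq_below m.+2 (ins_arc p q G) (ins_arc p q G').
Proof.
move=> h y ym; rewrite /ins_arc; case: eqP => // yp; case: eqP => // yq.
by rewrite h // unskip2_lt.
Qed.

Lemma del_arc_eq_below F F' :
  eq_below m.+2 F F' -> eq_below m (del_arc p q F) (del_arc p q F').
Proof. by move=> h x xm; rewrite /del_arc h // skip2_ltS2. Qed.
End InsDelArc.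

(* [x] and [x+1] open the arcs of an occurrence of 21 (points are 0-based). *)
Definition occ21 m (F : nat -> nat) x :=
  [&& x.+1 < m, x.+1 < F x.+1 & F x == (F x.+1).+1].

Lemma occ21_lt m F x : occ21 m F x -> x < m.
Proof. by case/and3P => /ltnW. Qed.

Lemma occ21_eq_below m F G x : eq_below m F G -> occ21 m F x = occ21 m G x.
Proof. by move=> h; rewrite /occ21; case: (ltnP x.+1 m) => //= xm; rewrite !h // ltnW. Qed.

Section OccInsArc.
Variables (p q m : nat) (G : nat -> nat).
Hypotheses (ltpq : p < q) (ltqm : q < m.+2).
Local Notation F := (ins_arc p q G).

Lemma occ21_ins_arc_skip2 x : occ21 m G x ->
  x.+1 <> p -> x.+2 <> q -> (G x.+1).+1 <> p -> (G x.+1).+2 <> q ->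
  occ21 m.+2 F (skip2 p q x).
Proof.
move=> /and3P [xm lt /eqP e] n1 n2 n3 n4.
rewrite /occ21 -(skip2S ltpq n1 n2) !(ins_arc_skip2 ltpq) (skip2_ltS2 ltpq _ ltqm) xm.
by rewrite (ltn_skip2 ltpq) lt e (skip2S ltpq n3 n4) eqxx.
Qed.

Lemma occ21_ins_arc_unskip2 y : occ21 m.+2 F y ->
  y <> p -> y <> q -> y.+1 <> p -> y.+1 <> q ->
  [/\ occ21 m G (unskip2 p q y), (G (unskip2 p q y).+1).+1 <> p
    & (G (unskip2 p q y).+1).+2 <> q].
Proof.
move=> oc n1 n2 n3 n4.
have e0 := unskip2K ltpq n1 n2.
have e1 : y.+1 = skip2 p q (unskip2 p q y).+1 by rewrite -unskip2S // unskip2K.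
move: (unskip2 p q y) e0 e1 => x e0 e1.
move: oc; rewrite /occ21 e1 -e0 !(ins_arc_skip2 ltpq) (skip2_ltS2 ltpq _ ltqm).
rewrite (ltn_skip2 ltpq).
case/and3P=> xm lt /eqP /(skip2_eqS ltpq) [-> *].
by rewrite /occ21 xm lt eqxx.
Qed.
End OccInsArc.

Section OccInsArcFirst.
Variables (m b : nat) (G : nat -> nat).
Hypotheses (iG : fpf_inv m G) (gt0b : 0 < b) (ltbm : b < m.+2).
Local Notation F := (ins_arc 0 b G).

Lemma skip2_00 : skip2 0 b 0 = 1 \/ b = 1.
Proof. by rewrite /skip2; case: ifP; [left | right; lia]. Qed.

Lemma occ21_ins_arc_first : 0 < m -> b = (G 0).+2 -> occ21 m.+2 F 0.
Proof.
move=> gt0m bG0; have [G0m G00 _] := iG gt0m.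
have [s1|b1] := skip2_00; last by lia.
rewrite /occ21 ins_arc_p -s1 (ins_arc_skip2 gt0b) /skip2 /=; case_ifs; lia.
Qed.

Lemma occ21_ins_arc_first_cases y : occ21 m.+2 F y ->
  b = (G 0).+2 \/ exists2 x, occ21 m G x & b <> x.+2 /\ b <> (G x.+1).+2.
Proof.
move=> oc; have Fb := ins_arc_q 0 b G.
case: (y =P 0) => [y0|yn0].
  left; move: oc; rewrite y0 /occ21 ins_arc_p.
  have [s1|b1] := skip2_00; last by rewrite b1 in Fb *; rewrite Fb andbF.
  rewrite -s1 (ins_arc_skip2 gt0b) => /and3P [_ _ /eqP]; rewrite /skip2 /=; case_ifs; lia.
case: (y =P b) => [yb|ynb]; first by move: oc; rewrite /occ21 yb Fb /= !andbF.
case: (y.+1 =P b) => [yb|ynb1]; first by move: oc; rewrite /occ21 yb Fb /= !andbF.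
case: (occ21_ins_arc_unskip2 gt0b ltbm oc yn0 ynb _ ynb1) => // ox _ nb.
right; exists (unskip2 0 b y) => //; split; last by move=> e; exact: nb (esym e).
by move: ynb ynb1; rewrite /unskip2 /=; case_ifs; lia.
Qed.
End OccInsArcFirst.

Section OccInsArcNext.
Variables (k a : nat) (H : nat -> nat).
Hypotheses (iH : fpf_inv k H) (ltak : a < k) (ltaH : a < H a).
Local Notation p := a.+1.
Local Notation q := (H a).+1.
Local Notation F := (ins_arc p q H).

Let ltpq : p < q. Proof. by []. Qed.
Let ltqk : q < k.+2. Proof. by case: (iH ltak) => *; lia. Qed.
Let skip2_a : skip2 p q a = a. Proof. by rewrite /skip2 ltnSn. Qed.

Lemma occ21_ins_arc_next : occ21 k.+2 F a.
Proof.
have Fa : F a = (H a).+2.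
  by have := ins_arc_skip2 ltpq H a; rewrite skip2_a => ->; rewrite /skip2; case_ifs; lia.
by rewrite /occ21 ins_arc_p Fa; apply/and3P; split => //; lia.
Qed.

Lemma occ21_ins_arc_next_shift : occ21 k H a -> occ21 k.+2 F a.+1.
Proof.
move=> /and3P [h1 h2 /eqP h3].
have s2 : skip2 p q a.+1 = a.+2 by rewrite /skip2; case_ifs; lia.
have F2 : F a.+2 = (H a.+1).+1.
  by have := ins_arc_skip2 ltpq H a.+1; rewrite s2 => ->; rewrite /skip2; case_ifs; lia.
by rewrite /occ21 F2 ins_arc_p; apply/and3P; split => //; lia.
Qed.

Lemma occ21_ins_arc_next_skip2 x : x <> a -> occ21 k H x -> occ21 k.+2 F (skip2 p q x).
Proof.
move=> xa ox; have /and3P [h1 h2 /eqP h3] := ox.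
have [_ _ Haa] := iH ltak.
have [_ _ Hx] := iH (ltnW h1).
have [_ _ Hx1] := iH h1.
have c1 : x.+1 <> H a by move=> e; move: h2; rewrite e Haa; lia.
apply: occ21_ins_arc_skip2 => //; try lia.
- by move=> e; apply: c1; rewrite -Hx1; congr H; lia.
- by move=> e; apply: xa; rewrite -Hx -Haa; congr H; lia.
Qed.

Lemma occ21_ins_arc_next_cases y : occ21 k.+2 F y -> y = a \/ occ21 k H (unskip2 p q y).
Proof.
move=> oc; case: (y =P a) => [->|ya]; [by left | right].
have Fq := ins_arc_q p q H.
case: (y =P p) => [yp|ynp].
  move: oc; rewrite yp /occ21 ins_arc_p.
  case: (a.+2 =P q) => [e|ne]; first by rewrite e Fq => /and3P [_ h _]; lia.
  have s2 : skip2 p q a.+1 = a.+2 by rewrite /skip2; case_ifs; lia.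
  have := ins_arc_skip2 ltpq H a.+1; rewrite s2 => -> /and3P [h1 h2 /eqP h3].
  have -> : unskip2 p q a.+1 = a by rewrite /unskip2; case_ifs; lia.
  by move: h2 h3; rewrite /skip2; case_ifs => h2 h3; apply/and3P; split; lia.
case: (y.+1 =P q) => [yq|ynq].
  by move: oc; rewrite /occ21 yq Fq => /and3P [_ h _]; lia.
case: (y =P q) => [yq|ynq'].
  by move: oc; rewrite /occ21 yq Fq => /and3P [_ h /eqP e]; lia.
have ynp1 : y.+1 <> p by lia.
by case: (occ21_ins_arc_unskip2 ltpq ltqk oc ynp ynq' ynp1 ynq).
Qed.
End OccInsArcNext.

Lemma occ21_separated_uniq m G x y b : fpf_inv m G -> occ21 m G x -> occ21 m G y ->
  (b = x.+2 \/ b = (G x.+1).+2) -> (b = y.+2 \/ b = (G y.+1).+2) -> x = y.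
Proof.
move=> iG ox oy.
have /and3P [x1 x2 /eqP x3] := ox; have /and3P [y1 y2 /eqP y3] := oy.
have [_ _ Gx1] := iG _ x1; have [_ _ Gy1] := iG _ y1.
have cross u v : occ21 m G u -> occ21 m G v -> u <> G v.+1.
  move=> /and3P [u1 u2 /eqP u3] /and3P [v1 v2 /eqP v3] e.
  have [_ _ Gv1] := iG _ v1.
  have : G u = v.+1 by rewrite e Gv1.
  lia.
case=> -> [e|e].
- lia.
- by case: (cross x y ox oy); lia.
- by case: (cross y x oy ox); lia.
- have : G (G x.+1) = G (G y.+1) by congr G; lia.
  by rewrite Gx1 Gy1; lia.
Qed.

Section OrdFun.
Variable m : nat.

Definition ordfun := {ffun 'I_m -> 'I_m}.

(* [natf f] extends [f] to [nat] by the identity. *)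
Definition natf (f : ordfun) x := odflt x (omap (fun i : 'I_m => val (f i)) (insub x)).
Definition ordfun_of (F : nat -> nat) : ordfun := [ffun i : 'I_m => insubd i (F i)].

Lemma natfE (f : ordfun) (i : 'I_m) : natf f i = f i.
Proof. by rewrite /natf valK. Qed.

Lemma natf_lt (f : ordfun) x : x < m -> natf f x < m.
Proof. by move=> xm; rewrite -[x]/(val (Ordinal xm)) natfE. Qed.

Lemma natf_ordfun_of F : (forall x, x < m -> F x < m) -> eq_below m (natf (ordfun_of F)) F.
Proof.
by move=> Fm x xm; rewrite -[x]/(val (Ordinal xm)) natfE ffunE val_insubd /= Fm.
Qed.

Lemma natf_inj (f g : ordfun) : eq_below m (natf f) (natf g) -> f = g.
Proof.
by move=> h; apply/ffunP => i; apply: val_inj; have := h i (ltn_ord i); rewrite !natfE.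
Qed.

Lemma ordfun_of_natf (f : ordfun) F : eq_below m (natf f) F -> ordfun_of F = f.
Proof.
move=> h; apply: natf_inj; apply: eq_below_trans (eq_below_sym h).
by apply: natf_ordfun_of => x xm; rewrite -h // natf_lt.
Qed.

Definition fpf_invb (f : ordfun) :=
  [forall i : 'I_m, (natf f (natf f i) == i) && (natf f i != i)].

Lemma fpf_invP f : reflect (fpf_inv m (natf f)) (fpf_invb f).
Proof.
apply: (iffP forallP) => h.
- move=> x xm; have /andP [/eqP h1 /eqP h2] := h (Ordinal xm).
  by split => //; apply: natf_lt.
- by move=> i; case: (h i (ltn_ord i)) => _ h2 ->; rewrite eqxx; apply/eqP.
Qed.

Definition occ21_set (f : ordfun) := [set i : 'I_m | occ21 m (natf f) i].
Definition no21 := [set f : ordfun | fpf_invb f && (occ21_set f == set0)].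
Definition one21 := [set f : ordfun | fpf_invb f && (#|occ21_set f| == 1)].

Lemma no21P f :
  reflect (fpf_inv m (natf f) /\ forall y, ~~ occ21 m (natf f) y) (f \in no21).
Proof.
rewrite inE; apply: (iffP andP) => [[/fpf_invP iF /eqP o0]|[iF no]].
- split=> // y; apply/negP => oy.
  have : Ordinal (occ21_lt oy) \in occ21_set f by rewrite inE.
  by rewrite o0 inE.
- by split; [exact/fpf_invP | apply/eqP/setP => i; rewrite !inE (negbTE (no i))].
Qed.

Lemma one21P f : reflect (fpf_inv m (natf f) /\
    exists x, occ21 m (natf f) x /\ forall y, occ21 m (natf f) y -> y = x)
  (f \in one21).
Proof.
rewrite inE; apply: (iffP andP) => [[/fpf_invP iF /cards1P [x hx]]|[iF [x [ox ux]]]].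
- split=> //; exists x; split.
    have : x \in occ21_set f by rewrite hx set11.
    by rewrite inE.
  move=> y oy; have : Ordinal (occ21_lt oy) \in occ21_set f by rewrite inE.
  by rewrite hx inE => /eqP <-.
- split; first exact/fpf_invP.
  apply/cards1P; exists (Ordinal (occ21_lt ox)); apply/setP => i.
  by rewrite !inE; apply/idP/eqP => [/ux oi|->//]; apply: val_inj.
Qed.

Lemma no21_one21F f : f \in no21 -> f \in one21 = false.
Proof. by rewrite !inE => /andP [_ /eqP ->]; rewrite cards0 andbF. Qed.
End OrdFun.

Section DelFirstArc.
Variable m : nat.
Hypothesis gt0m : 0 < m.

Definition del_first (f : ordfun m.+2) : ordfun m :=
  ordfun_of m (del_arc 0 (natf f 0) (natf f)).
Definition ins_first (g : ordfun m) (b : nat) : ordfun m.+2 :=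
  ordfun_of m.+2 (ins_arc 0 b (natf g)).

Section InsFirst.
Variables (g : ordfun m) (b : nat).
Hypotheses (ig : fpf_inv m (natf g)) (gt0b : 0 < b) (ltbm : b < m.+2).

Lemma natf_ins_first : eq_below m.+2 (natf (ins_first g b)) (ins_arc 0 b (natf g)).
Proof. by apply: natf_ordfun_of => x xm; case: (fpf_inv_ins_arc gt0b ltbm ig xm). Qed.

Lemma fpf_inv_ins_first : fpf_inv m.+2 (natf (ins_first g b)).
Proof.
exact: fpf_inv_eq_below (eq_below_sym natf_ins_first) (fpf_inv_ins_arc gt0b ltbm ig).
Qed.

Lemma ins_first0 : natf (ins_first g b) 0 = b.
Proof. by rewrite natf_ins_first // ins_arc_p. Qed.

Lemma ins_firstK : del_first (ins_first g b) = g.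
Proof.
apply: ordfun_of_natf; rewrite ins_first0 => x xm.
by rewrite (del_arc_eq_below gt0b ltbm natf_ins_first) // (ins_arcK gt0b).
Qed.

Lemma ins_first_no21 : ins_first g b \in no21 m.+2 <->
  b <> (natf g 0).+2 /\ forall x, occ21 m (natf g) x -> b = x.+2 \/ b = (natf g x.+1).+2.
Proof.
have occE y := occ21_eq_below y natf_ins_first.
split.
- case/no21P=> _ no; split=> [bG0|x ox].
    by move: (no 0); rewrite occE occ21_ins_arc_first.
  case: (b =P x.+2) => [|n1]; first by left.
  case: (b =P (natf g x.+1).+2) => [|n2]; first by right.
  move: (no (skip2 0 b x)); rewrite occE occ21_ins_arc_skip2 //; lia.
- case=> nbG0 sep; apply/no21P; split=> [|y]; first exact: fpf_inv_ins_first.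
  apply/negP; rewrite occE => /(occ21_ins_arc_first_cases gt0b ltbm) [//|[x ox [n1 n2]]].
  by case: (sep x ox).
Qed.
End InsFirst.

Lemma del_first_spec (f : ordfun m.+2) : fpf_inv m.+2 (natf f) ->
  [/\ 0 < natf f 0, natf f 0 < m.+2, fpf_inv m (natf (del_first f))
    & ins_first (del_first f) (natf f 0) = f].
Proof.
move=> iF; have [ltf0 nf00 _] := iF 0 (ltn0Sn _).
have gt0f0 : 0 < natf f 0 by case: (natf f 0) nf00.
have iD := fpf_inv_del_arc gt0f0 ltf0 iF (erefl _).
have eD : eq_below m (natf (del_first f)) (del_arc 0 (natf f 0) (natf f)).
  by apply: natf_ordfun_of => x xm; case: (iD x xm).
have iR := fpf_inv_eq_below (eq_below_sym eD) iD.
split=> //; apply: ordfun_of_natf.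
apply: eq_below_trans (eq_below_sym (del_arcK gt0f0 ltf0 iF (erefl _))) _.
exact: ins_arc_eq_below (eq_below_sym eD).
Qed.

Definition admissible (g : ordfun m) :=
  [set b : 'I_m.+2 | (0 < b) && (ins_first g b \in no21 m.+2)].

Lemma del_first_fiber (g : ordfun m) : fpf_inv m (natf g) ->
  [set f in no21 m.+2 | del_first f == g] =
  [set ins_first g b | b : 'I_m.+2 in admissible g].
Proof.
move=> ig; apply/setP => f; rewrite inE; apply/andP/imsetP.
- case=> f21 /eqP <-; have /no21P [iF _] := f21.
  case: (del_first_spec iF) => gt0f0 ltf0 _ fK.
  by exists (Ordinal ltf0); rewrite // inE gt0f0 fK.
- case=> b; rewrite inE => /andP [gt0b b21] ->.
  by rewrite ins_firstK.
Qed.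

Lemma admissibleP (g : ordfun m) (b : 'I_m.+2) : fpf_inv m (natf g) ->
  b \in admissible g <-> [/\ 0 < b, (b : nat) <> (natf g 0).+2 &
    forall x, occ21 m (natf g) x -> (b : nat) = x.+2 \/ (b : nat) = (natf g x.+1).+2].
Proof.
move=> ig; rewrite inE; split.
- by case/andP=> gt0b /(ins_first_no21 ig gt0b (ltn_ord b)) [].
- case=> gt0b *; rewrite gt0b; exact/(ins_first_no21 ig gt0b (ltn_ord b)).
Qed.

Lemma card_admissible_no21 (g : ordfun m) : g \in no21 m -> #|admissible g| = m.
Proof.
case/no21P=> ig no; have lt2 : (natf g 0).+2 < m.+2 by case: (ig 0 gt0m).
have -> : admissible g = ~: [set ord0; Ordinal lt2].
  apply/setP => b; rewrite in_setC in_set2 -!val_eqE /=; apply/idP/idP.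
  - by case/(admissibleP b ig) => *; lia.
  - move=> nb; apply/(admissibleP b ig); split; try lia.
    by move=> x ox; move: (no x); rewrite ox.
by have := cardsC [set ord0; Ordinal lt2]; rewrite cards2 -val_eqE card_ord /=; lia.
Qed.

Lemma card_admissible_one21 (g : ordfun m) : g \in one21 m -> #|admissible g| = 2.
Proof.
case/one21P=> ig [x [ox ux]].
have /and3P [x1 x2 /eqP Gx] := ox.
have [Gx1m _ GGx1] := ig _ x1; have [G0m _ GG0] := ig _ gt0m.
have lt1 : x.+2 < m.+2 by lia.
have lt2 : (natf g x.+1).+2 < m.+2 by lia.
have -> : admissible g = [set Ordinal lt1; Ordinal lt2].
  apply/setP => b; rewrite in_set2 -!val_eqE /=; apply/idP/idP.
  - by case/(admissibleP b ig) => _ _ /(_ x ox) [] ->; rewrite eqxx ?orbT.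
  - move=> sep; apply/(admissibleP b ig); split; first by lia.
    + case/orP: sep => /eqP -> e.
        have x0 : x = natf g 0 by lia.
        by move: Gx; rewrite {1}x0 GG0.
      have : natf g (natf g x.+1) = natf g (natf g 0) by congr natf; lia.
      by rewrite GGx1 GG0.
    + by move=> y /ux ->; case/orP: sep => /eqP ->; [left | right].
by rewrite cards2 -val_eqE /=; case: eqP => //; lia.
Qed.

Lemma admissible_many (g : ordfun m) : fpf_inv m (natf g) ->
  g \notin no21 m -> g \notin one21 m -> admissible g = set0.
Proof.
move=> ig n0 n1; apply/setP => b; rewrite in_set0.
apply/negP => /(admissibleP b ig) [_ _ sep].
have [x ox] : exists x, occ21 m (natf g) x.
  move: n0; rewrite inE (introT (fpf_invP _) ig) /= => /set0Pn [x].
  by rewrite inE; exists x.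
move/negP: n1; apply; apply/one21P; split=> //; exists x; split=> // y oy.
exact: occ21_separated_uniq ig oy ox (sep y oy) (sep x ox).
Qed.

Lemma ins_first_inj (g : ordfun m) : fpf_inv m (natf g) ->
  {in admissible g &, injective (fun b : 'I_m.+2 => ins_first g b)}.
Proof.
move=> ig b1 b2; rewrite !inE => /andP [gt0b1 _] /andP [gt0b2 _] e; apply: ord_inj.
by rewrite -(ins_first0 ig gt0b1 (ltn_ord b1)) e ins_first0.
Qed.

Lemma card_del_first_fiber (g : ordfun m) :
  #|[set f in no21 m.+2 | del_first f == g]| =
  if g \in no21 m then m else if g \in one21 m then 2 else 0.
Proof.
have [/fpf_invP ig | nig] := boolP (fpf_invb g); last first.
  rewrite !inE (negbTE nig); apply/eqP; rewrite cards_eq0; apply/eqP/setP => f.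
  rewrite in_set in_set0; apply/negP => /andP [/no21P [iF _] /eqP fg].
  by case: (del_first_spec iF) => _ _ iD _; move: nig; rewrite -fg => /fpf_invP.
rewrite del_first_fiber // card_in_imset; last exact: ins_first_inj.
case: ifP => [/card_admissible_no21 // | /negbT n0].
case: ifP => [/card_admissible_one21 // | /negbT n1].
by rewrite admissible_many // cards0.
Qed.

Lemma card_no21_del_first : #|no21 m.+2| = m * #|no21 m| + 2 * #|one21 m|.
Proof.
rewrite -sum1_card (partition_big del_first predT) //=.
rewrite (eq_bigr (fun g =>
  (if g \in no21 m then m else 0) + (if g \in one21 m then 2 else 0))).
  by rewrite big_split -!big_mkcond /= !sum_nat_const !(mulnC #|_|).
move=> g _; rewrite sum1dep_card card_del_first_fiber.
by case: ifP => [/no21_one21F -> | _]; rewrite ?addn0 //; case: ifP.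
Qed.
End DelFirstArc.

Section Openers.
Variable k : nat.

Definition openers (h : ordfun k) := [set a : 'I_k | a < natf h a].

Lemma card_openers (h : ordfun k) : fpf_inv k (natf h) -> #|openers h| = k./2.
Proof.
move=> ih.
have hK : involutive h.
  by move=> a; apply: ord_inj; have [_ _ e] := ih a (ltn_ord a); rewrite -!natfE.
have closers : ~: openers h = h @: openers h.
  apply/setP => c; rewrite !inE; apply/idP/imsetP.
  - move=> hc; exists (h c); last by rewrite hK.
    by rewrite inE -!natfE; have [_ h2 ->] := ih c (ltn_ord c); lia.
  - case=> a; rewrite inE => ha ->; rewrite -!natfE.
    by have [_ h2 ->] := ih a (ltn_ord a); lia.
have := cardsC (openers h); rewrite closers card_imset ?card_ord; last exact: inv_inj.
by move=> e; rewrite -[in RHS]e addnn doubleK.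
Qed.
End Openers.

Section Contract21.
Variable k : nat.

Definition first_occ21 (f : ordfun k.+2) := find (occ21 k.+2 (natf f)) (iota 0 k.+2).
Definition contract21 (f : ordfun k.+2) : ordfun k :=
  ordfun_of k (del_arc (first_occ21 f).+1 (natf f (first_occ21 f).+1) (natf f)).
Definition expand21 (h : ordfun k) (a : nat) : ordfun k.+2 :=
  ordfun_of k.+2 (ins_arc a.+1 (natf h a).+1 (natf h)).

Lemma first_occ21_uniq (f : ordfun k.+2) x : occ21 k.+2 (natf f) x ->
  (forall y, occ21 k.+2 (natf f) y -> y = x) -> first_occ21 f = x.
Proof.
move=> ox ux.
have hs : has (occ21 k.+2 (natf f)) (iota 0 k.+2).
  by apply/hasP; exists x => //; rewrite mem_iota add0n (occ21_lt ox).
have := nth_find 0 hs; rewrite nth_iota ?add0n; first exact: ux.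
by rewrite -[X in _ < X](size_iota 0 k.+2) -has_find.
Qed.

Section Expand.
Variables (h : ordfun k) (a : nat).
Hypotheses (ih : fpf_inv k (natf h)) (ltak : a < k) (ltah : a < natf h a).
Hypothesis no : forall x, ~~ occ21 k (natf h) x.

Let ltpq : a.+1 < (natf h a).+1. Proof. by []. Qed.
Let ltqk : (natf h a).+1 < k.+2. Proof. by case: (ih ltak) => *; lia. Qed.

Lemma natf_expand21 :
  eq_below k.+2 (natf (expand21 h a)) (ins_arc a.+1 (natf h a).+1 (natf h)).
Proof. by apply: natf_ordfun_of => x xm; case: (fpf_inv_ins_arc ltpq ltqk ih xm). Qed.

Lemma occ21_expand21 y : occ21 k.+2 (natf (expand21 h a)) y = (y == a).
Proof.
rewrite (occ21_eq_below _ natf_expand21); apply/idP/eqP => [|->].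
- case/(occ21_ins_arc_next_cases ih ltak ltah) => // o.
  by move: (no (unskip2 a.+1 (natf h a).+1 y)); rewrite o.
- exact: occ21_ins_arc_next.
Qed.

Lemma expand21_one21 : expand21 h a \in one21 k.+2.
Proof.
apply/one21P; split.
  exact: fpf_inv_eq_below (eq_below_sym natf_expand21) (fpf_inv_ins_arc ltpq ltqk ih).
by exists a; split=> [|y]; rewrite occ21_expand21 // => /eqP.
Qed.

Lemma expand21K : contract21 (expand21 h a) = h.
Proof.
have ea : first_occ21 (expand21 h a) = a.
  by apply: first_occ21_uniq => [|y]; rewrite occ21_expand21 // => /eqP.
apply: ordfun_of_natf => x xk; rewrite ea natf_expand21 ?ins_arc_p; last by lia.
by rewrite (del_arc_eq_below ltpq ltqk natf_expand21) // (ins_arcK ltpq).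
Qed.
End Expand.

Section Contract.
Variables (f : ordfun k.+2) (x : nat).
Hypotheses (iF : fpf_inv k.+2 (natf f)) (ox : occ21 k.+2 (natf f) x).
Hypothesis ux : forall y, occ21 k.+2 (natf f) y -> y = x.
Local Notation q := (natf f x.+1).

Let ltpq : x.+1 < q. Proof. by case/and3P: ox. Qed.
Let ltqk : q < k.+2. Proof. by case/and3P: ox => x1 _ _; case: (iF x1). Qed.
Let ltxk : x < k. Proof. by move: ltpq ltqk; lia. Qed.

Lemma natf_contract21 : eq_below k (natf (contract21 f)) (del_arc x.+1 q (natf f)).
Proof.
rewrite /contract21 (first_occ21_uniq ox ux).
by apply: natf_ordfun_of => y yk; case: (fpf_inv_del_arc ltpq ltqk iF (erefl _) yk).
Qed.

Lemma fpf_inv_contract21 : fpf_inv k (natf (contract21 f)).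
Proof.
have iD := fpf_inv_del_arc ltpq ltqk iF (erefl _).
exact: fpf_inv_eq_below (eq_below_sym natf_contract21) iD.
Qed.

Lemma contract21_x : (natf (contract21 f) x).+1 = q.
Proof.
rewrite natf_contract21 // /del_arc (_ : skip2 x.+1 q x = x) ?/skip2 ?ltnSn //.
by case/and3P: ox => _ _ /eqP ->; rewrite /unskip2; case_ifs; lia.
Qed.

Lemma contract21_opener : x < natf (contract21 f) x.
Proof. by move: ltpq; rewrite -contract21_x. Qed.

Lemma contract21K : expand21 (contract21 f) x = f.
Proof.
apply: ordfun_of_natf; rewrite contract21_x.
apply: eq_below_trans (eq_below_sym (del_arcK ltpq ltqk iF (erefl _))) _.
exact: ins_arc_eq_below (eq_below_sym natf_contract21).
Qed.

Lemma contract21_no21 : contract21 f \in no21 k.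
Proof.
have ic := fpf_inv_contract21; have oc := contract21_opener.
have eF : eq_below k.+2 (natf f)
    (ins_arc x.+1 (natf (contract21 f) x).+1 (natf (contract21 f))).
  by rewrite -{1}contract21K; exact: natf_expand21.
apply/no21P; split=> // y; apply/negP.
case: (y =P x) => [-> | nyx] oy.
  have := occ21_ins_arc_next_shift ic ltxk oc oy.
  by rewrite -(occ21_eq_below _ eF) => /ux; lia.
have := occ21_ins_arc_next_skip2 ic ltxk oc nyx oy.
rewrite -(occ21_eq_below _ eF) => /ux; move: nyx; rewrite /skip2; case_ifs; lia.
Qed.
End Contract.

Lemma card_contract21_fiber (h : ordfun k) :
  #|[set f in one21 k.+2 | contract21 f == h]| = if h \in no21 k then k./2 else 0.
Proof.
have [h21 | nh21] := boolP (h \in no21 k); last first.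
  apply/eqP; rewrite cards_eq0; apply/eqP/setP => f; rewrite in_set in_set0.
  apply/negP => /andP [/one21P [iF [x [ox ux]]] /eqP fh].
  by move: nh21; rewrite -fh (contract21_no21 iF ox ux).
have /no21P [ih no] := h21.
have -> : [set f in one21 k.+2 | contract21 f == h] =
    [set expand21 h a | a : 'I_k in openers h].
  apply/setP => f; rewrite in_set; apply/andP/imsetP.
  - case=> /one21P [iF [x [ox ux]]] /eqP <-.
    have ltxk : x < k by case/and3P: (ox) => x1 x2 _; case: (iF _ x1) => *; lia.
    exists (Ordinal ltxk); last by rewrite /= contract21K.
    by rewrite inE contract21_opener.
  - case=> a; rewrite inE => ltah ->.
    by rewrite expand21_one21 ?expand21K.
rewrite card_in_imset; first exact: card_openers.
move=> a1 a2; rewrite !inE => h1 h2 e; apply: ord_inj; apply/eqP.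
by rewrite -(occ21_expand21 ih (ltn_ord a2) h2 no) -e (occ21_expand21 ih (ltn_ord a1) h1 no).
Qed.

Lemma card_one21_contract : #|one21 k.+2| = k./2 * #|no21 k|.
Proof.
rewrite -sum1_card (partition_big contract21 predT) //=.
rewrite (eq_bigr (fun h => if h \in no21 k then k./2 else 0)).
  by rewrite -big_mkcond sum_nat_const mulnC.
by move=> h _; rewrite sum1dep_card card_contract21_fiber.
Qed.
End Contract21.

Section Matchings.
Variable n : nat.
Local Notation m := n.*2.

Definition arcs_of (f : ordfun m) : {set arc n} :=
  [set e : arc n | (e.1 < e.2) && (f e.1 == e.2)].

Lemma fpf_inv_ord (f : ordfun m) : fpf_inv m (natf f) -> involutive f /\ forall i, f i != i.
Proof.
move=> iF; split => i; have [_ fii ffi] := iF i (ltn_ord i).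
  by apply: ord_inj; rewrite -!natfE.
by apply/eqP => e; apply: fii; rewrite natfE e.
Qed.

Lemma arcs_of_at (f : ordfun m) p : fpf_inv m (natf f) ->
  [set e in arcs_of f | (e.1 == p) || (e.2 == p)] =
  [set if p < f p then (p, f p) else (f p, p)].
Proof.
move=> iF; have [fK fn] := fpf_inv_ord iF.
have fpp : (f p : nat) != p by rewrite val_eqE fn.
apply/setP => [[u v]]; rewrite !inE /=.
case: (ltnP p (f p)) => hp; rewrite xpair_eqE; apply/idP/idP.
- case/andP => /andP [uv /eqP fu] /orP [/eqP up | /eqP vp].
    by rewrite up in fu *; rewrite fu !eqxx.
  have uf : u = f p by rewrite -vp -fu fK.
  by move: uv; rewrite uf vp; lia.
- by case/andP => /eqP -> /eqP ->; rewrite hp !eqxx.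
- case/andP => /andP [uv /eqP fu] /orP [/eqP up | /eqP vp].
    by move: uv; rewrite -fu up; lia.
  by rewrite -vp -fu fK !eqxx.
- by case/andP => /eqP -> /eqP ->; rewrite fK !eqxx orbT andbT; lia.
Qed.

Lemma matching_arcs_of (f : ordfun m) : fpf_inv m (natf f) -> is_matching (arcs_of f).
Proof.
move=> iF; apply/andP; split.
  by apply/forall_inP => e; rewrite inE => /andP [].
by apply/forallP => p; rewrite (arcs_of_at _ iF) cards1.
Qed.

Lemma has_endhered21_arcs_of (f : ordfun m) :
  has_endhered21 (arcs_of f) = (occ21_set f != set0).
Proof.
apply/idP/set0Pn.
- case/exists_inP => e1; rewrite inE => /andP [lt1 /eqP f1].
  case/exists_inP => e2; rewrite inE => /andP [lt2 /eqP f2] /andP [/eqP c1 /eqP c2].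
  exists e1.1; rewrite inE /occ21.
  have e21 : natf f (e1.1).+1 = e2.2 by rewrite -addn1 -c1 natfE f2.
  rewrite e21 natfE f1 c2 addn1 eqxx andbT.
  by have := ltn_ord e2.1; rewrite c1 addn1 => -> /=; move: lt2; rewrite c1 addn1.
- case=> x; rewrite inE => /and3P [x1 x2 /eqP x3].
  apply/exists_inP; exists (x, f x).
    by rewrite inE /= eqxx andbT -natfE x3; lia.
  apply/exists_inP; exists (Ordinal x1, f (Ordinal x1)).
    by rewrite inE /= eqxx andbT -natfE.
  by rewrite /= !addn1 eqxx -!natfE /= x3.
Qed.

Lemma arcs_of_inj : {in [pred f | fpf_invb f] &, injective arcs_of}.
Proof.
move=> f g /fpf_invP iF /fpf_invP iG e.
have [fK fn] := fpf_inv_ord iF; have [gK _] := fpf_inv_ord iG.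
have key u v : (u, v) \in arcs_of f -> g u = v by rewrite e inE => /andP [_ /eqP].
apply/ffunP => p; case: (ltnP p (f p)) => hp.
  by apply/esym/key; rewrite inE /= hp eqxx.
have hp' : f p < p by move: (fn p) hp; rewrite -val_eqE /=; lia.
by rewrite -[in RHS](key (f p) p) ?gK // inE /= hp' fK eqxx.
Qed.

Section Partner.
Variable M : {set arc n}.
Hypothesis mM : is_matching M.

Definition arc_at p := odflt (p, p) [pick e in M | (e.1 == p) || (e.2 == p)].

Lemma arc_at_spec p : [set e in M | (e.1 == p) || (e.2 == p)] = [set arc_at p].
Proof.
case/andP: mM => _ /forallP /(_ p) /cards1P [e he]; rewrite he /arc_at.
case: pickP => [e' pe' | none] /=.
  have : e' \in [set e in M | (e.1 == p) || (e.2 == p)] by rewrite inE.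
  by rewrite he => /set1P ->.
have : e \in [set e in M | (e.1 == p) || (e.2 == p)] by rewrite he set11.
by rewrite inE none.
Qed.

Lemma arc_atP p : arc_at p \in M /\ ((arc_at p).1 == p) || ((arc_at p).2 == p).
Proof.
by have : arc_at p \in [set arc_at p] := set11 _; rewrite -arc_at_spec inE => /andP.
Qed.

Lemma arc_at_uniq p e : e \in M -> (e.1 == p) || (e.2 == p) -> e = arc_at p.
Proof.
move=> eM ep; have : e \in [set e in M | (e.1 == p) || (e.2 == p)] by rewrite inE eM.
by rewrite arc_at_spec => /set1P.
Qed.

Definition partner : ordfun m :=
  [ffun p => if (arc_at p).1 == p then (arc_at p).2 else (arc_at p).1].

Lemma arc_at_partner p : arc_at p = (p, partner p) /\ p < partner p \/
                         arc_at p = (partner p, p) /\ partner p < p.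
Proof.
case/andP: mM => /forall_inP lt _; have [eM ep] := arc_atP p.
have := lt _ eM; rewrite ffunE; move: eM ep; case: (arc_at p) => u v /= eM ep uv.
case: (u =P p) => [up | nup]; first by left; rewrite -up.
by move: ep; case: eqP => // _ /eqP vp; right; rewrite -vp.
Qed.

Lemma partner_neq p : partner p != p.
Proof. by apply/eqP => e; case: (arc_at_partner p) => [[_]|[_]]; rewrite e ltnn. Qed.

Lemma partnerK : involutive partner.
Proof.
move=> p; have [eM _] := arc_atP p.
have at_partner : arc_at (partner p) = arc_at p.
  apply/esym/arc_at_uniq => //.
  by case: (arc_at_partner p) => [[-> _]|[-> _]]; rewrite eqxx ?orbT.
rewrite [LHS]ffunE at_partner.
case: (arc_at_partner p) => [[-> _]|[-> _]] /=; last by rewrite eqxx.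
by rewrite eq_sym (negbTE (partner_neq p)).
Qed.

Lemma fpf_invb_partner : fpf_invb partner.
Proof. by apply/forallP => p; rewrite !natfE partnerK eqxx partner_neq. Qed.

Lemma arcs_of_partner : arcs_of partner = M.
Proof.
case/andP: mM => /forall_inP lt _.
apply/setP => e; rewrite inE; apply/idP/idP => [/andP [e12 /eqP pe] | eM].
  case: (arc_at_partner e.1) => [[ee _]|[_ pl]]; last by move: pl; rewrite pe ltnNge ltnW.
  by have [+ _] := arc_atP e.1; rewrite ee pe -surjective_pairing.
have ee : e = arc_at e.1 by apply: arc_at_uniq; rewrite ?eqxx.
by rewrite lt //= ffunE -ee eqxx.
Qed.
End Partner.

Lemma a0_no21 : a0 n = #|no21 m|.
Proof.
rewrite /a0; have -> : [set M : {set arc n} | is_matching M && ~~ has_endhered21 M] =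
    arcs_of @: no21 m.
  apply/setP => M; rewrite inE; apply/andP/imsetP.
  - case=> mM nM; exists (partner M); last by rewrite arcs_of_partner.
    move: nM; rewrite -{1}(arcs_of_partner mM) has_endhered21_arcs_of negbK.
    by rewrite inE fpf_invb_partner.
  - case=> f; rewrite inE => /andP [/fpf_invP iF /eqP o0] ->.
    by rewrite matching_arcs_of // has_endhered21_arcs_of o0 eqxx.
rewrite card_in_imset // => f g; rewrite !inE => /andP [fi _] /andP [gi _].
exact: arcs_of_inj.
Qed.
End Matchings.

Lemma card_no21_2 : #|no21 2| = 1.
Proof.
apply/eqP/cards1P; exists (ordfun_of 2 (fun x => 1 - x)).
have e : eq_below 2 (natf (ordfun_of 2 (fun x => 1 - x))) (fun x => 1 - x).
  by apply: natf_ordfun_of => x; lia.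
apply/setP => f; rewrite in_set1; apply/idP/eqP.
- case/no21P => iF _; apply/esym/ordfun_of_natf => x xm.
  by have [? ? _] := iF x xm; lia.
- move=> ->; apply/no21P; split=> [|y].
    by apply: fpf_inv_eq_below (eq_below_sym e) _ => x xm; split; lia.
  by rewrite (occ21_eq_below _ e) /occ21; apply/negP => /and3P [? ? _]; lia.
Qed.

Theorem corollary2 :
  a0 1 = 1 /\ a0 2 = 2 /\
  (forall n : nat, 2 <= n -> a0 n.+1 = 2 * n * a0 n + 2 * (n - 1) * a0 n.-1).
Proof.
have one21_2 : #|one21 2| = 0 by rewrite (card_one21_contract 0).
split; first by rewrite a0_no21 card_no21_2.
split; first by rewrite a0_no21 (card_no21_del_first (m := 2)) // one21_2 card_no21_2.
case=> [//|n] _; rewrite !a0_no21 /=.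
rewrite -[n.+2.*2]/(n.+1.*2.+2) card_no21_del_first ?double_gt0 //.
rewrite -[n.+1.*2]/(n.*2.+2) card_one21_contract doubleK subn1 /=.
by rewrite (_ : n.*2.+2 = 2 * n.+1) ?mulnA // -mul2n mulnS.
Qed.
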